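(* Let $m\ge 2$, let $n_1,\dots,n_m\ge 5$ be odd, and let $\mathcal{C}=\mathcal{C}(C_{n_1},\dots,C_{n_m})$ be the odd chain cycle. Then the vertex cover number of its strong resolving graph is $$\alpha(\mathcal{C}_{SR})=m-1+\left\lfloor\frac{n_1}{2}\right\rfloor+\left\lfloor\frac{n_m}{2}\right\rfloor+\sum_{i=2}^{m-1}\left\lfloor\frac{n_i-2}{2}\right\rfloor.$$
   Context: Let $C_{n_1},\dots,C_{n_m}$ be pairwise disjoint cycles, $V(C_{n_i})=\{v^i_1,\dots,v^i_{n_i}\}$ with $v^i_j$ adjacent to $v^i_{j+1}$ (indices mod $n_i$). The odd chain cycle (all $n_i$ odd) is obtained by identifying $v^i_{(n_i+1)/2+1}$ with $v^{i+1}_1$ for $i=1,\dots,m-1$. A vertex $u$ is maximally distant from $v$ if every neighbor $w$ of $u$ satisfies $d(v,w)\le d(u,v)$; $u,v$ are mutually maximally distant if each is maximally distant from the other. The strong resolving graph $G_{SR}$ of a connected graph $G$ has vertex set $V(G)$, with $u,v$ adjacent iff they are mutually maximally distant in $G$. $\alpha(H)$ denotes the minimum size of a vertex cover of $H$. *)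

From mathcomp Require Import all_boot.
Set Implicit Arguments. Unset Strict Implicit. Unset Printing Implicit Defensive.

Fixpoint walkb (T : finType) (e : rel T) (k : nat) (u v : T) : bool :=
  match k with
  | 0 => u == v
  | k'.+1 => [exists w, e u w && walkb e k' w v]
  end.

(* Graph distance: the least k with a walk of length k from u to v.
   (In a connected graph on |T| vertices it is < |T|; this is the usual distance.) *)
Definition dist (T : finType) (e : rel T) (u v : T) : nat :=
  find (fun k => walkb e k u v) (iota 0 #|T|).

Definition max_dist_from (T : finType) (e : rel T) (u v : T) : bool :=
  [forall w, e u w ==> (dist e v w <= dist e u v)].

Definition mutually_max_dist (T : finType) (e : rel T) (u v : T) : bool :=
  max_dist_from e u v && max_dist_from e v u.

Definition strong_resolving_graph (T : finType) (e : rel T) : rel T :=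
  fun u v => (u != v) && mutually_max_dist e u v.

Definition vertex_cover (T : finType) (e : rel T) (S : {set T}) : bool :=
  [forall u, forall v, e u v ==> (u \in S) || (v \in S)].

Definition vertex_cover_number (T : finType) (e : rel T) : nat :=
  \big[minn/#|T|]_(S : {set T} | vertex_cover e S) #|S|.

(* Cycles are indexed by i : 'I_m, cycle i (0-based) being C_{n (i+1)};
   its vertex j : 'I_(n (i+1)) is v^{i+1}_{j+1}. *)
Definition cyc_vert (m : nat) (n : nat -> nat) := {i : 'I_m & 'I_(n i.+1)}.

Definition cyc_adj (m : nat) (n : nat -> nat) (a b : cyc_vert m n) : bool :=
  (tag a == tag b :> nat) &&
  ((val (tagged b) == (val (tagged a)).+1 %% n (tag a).+1) ||
   (val (tagged a) == (val (tagged b)).+1 %% n (tag a).+1)).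

(* a (in the disjoint union) is glued to u: either a = u, or a = v^{i+1}_1 with
   i >= 1 (0-based cycle index) and u = v^{i}_{(n_i+1)/2+1}, i.e. 0-based
   cycle index i-1 and 0-based position (n_i+1)/2. *)
Definition glued (m : nat) (n : nat -> nat) (a u : cyc_vert m n) : bool :=
  (a == u) ||
  [&& 0 < tag a, val (tagged a) == 0, (tag u).+1 == tag a
    & val (tagged u) == (n (tag a) + 1)./2].

(* canonical representatives: all vertices except the v^{i+1}_1, i >= 2 (1-based) *)
Definition canon (m : nat) (n : nat -> nat) (a : cyc_vert m n) : bool :=
  ~~ ((0 < tag a) && (val (tagged a) == 0)).

Definition chain_vert (m : nat) (n : nat -> nat) := {a : cyc_vert m n | canon a}.

(* adjacency of the odd chain cycle (quotient of the disjoint union of cycles) *)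
Definition chain_adj (m : nat) (n : nat -> nat) : rel (chain_vert m n) :=
  fun u v => [exists a, exists b,
               [&& cyc_adj a b, glued a (val u) & glued b (val v)]].

Arguments chain_adj m n : clear implicits.

From mathcomp Require Import all_boot.
From mathcomp Require Import zify.
Set Implicit Arguments. Unset Strict Implicit. Unset Printing Implicit Defensive.

(* Cycle i (0-based, i < m) is Z_N with N = n_{i+1} = 2 K_i + 1, and its vertex 0 is,
   for i > 0, the vertex G_{i-1} = K_{i-1} + 1 of cycle i-1 (the gate to cycle i).
   1. Distances.  An explicit formula [cdist] (walk inside the cycle to the gate towards
      the target, cross each intermediate cycle at cost K, then walk to the target) is
      the graph distance, by the general criterion [dist_potential]: a potential that
      vanishes only at v, is 1-Lipschitz along edges and decreases along some edge out of
      every other vertex is the distance to v.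
   2. Upper bound.  Vertices at positions 2..K_i+1 of their cycle are pairwise not
      mutually maximally distant ([inner_independent]), so the 1 + sum K_i other
      vertices form a vertex cover.
   3. Lower bound.  Two non-cut vertices of a cycle at cyclic distance K are adjacent in
      the strong resolving graph, and t |-> t K mod N runs through such pairs, so a cover
      meets each cycle in about half of its vertices ([path_cover_count]).  Edges from
      positions <= 1 of a cycle to positions K, K+1 of a later cycle show that at most
      one cycle can meet the smaller per-cycle bound, whence 1 + sum K_i. *)

Lemma walk_length_ge_potential (T : finType) (e : rel T) (v : T) (f : T -> nat) :
  f v = 0 -> (forall x y, e x y -> f x <= (f y).+1) ->
  forall k x, walkb e k x v -> f x <= k.
Proof.
move=> f0 f_lip; elim=> [|k IH] x /=; first by move/eqP->; rewrite f0.
case/existsP=> w /andP[exw /IH fw]; exact: leq_trans (f_lip _ _ exw) _.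
Qed.

Lemma walk_along_potential (T : finType) (e : rel T) (v : T) (f : T -> nat) :
  (forall x, f x = 0 -> x = v) ->
  (forall x, 0 < f x -> exists y, e x y /\ (f y).+1 = f x) ->
  forall x, walkb e (f x) x v.
Proof.
move=> f0 f_desc x; move Hd: (f x) => d; elim: d x Hd => [|d IH] x fx /=.
  by rewrite (f0 _ fx).
have [y [exy fy]] : exists y, e x y /\ (f y).+1 = f x by apply: f_desc; rewrite fx.
apply/existsP; exists y; rewrite exy /=; apply: IH; rewrite fx in fy; by case: fy.
Qed.

(* A descending potential takes every value below f x, so f x < #|T|; this ensures
   the walk above lies within the search range of [dist]. *)
Lemma potential_lt_card (T : finType) (e : rel T) (f : T -> nat) :
  (forall x, 0 < f x -> exists y, e x y /\ (f y).+1 = f x) ->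
  forall x, f x < #|T|.
Proof.
move=> f_desc x.
have values_below : forall d z, f z = d -> forall t, t <= d -> exists y, f y = t.
  elim=> [|d IH] z fz t ht; first by exists z; lia.
  case: (ltngtP t d.+1) ht => // [ltd _ | -> _]; last by exists z.
  have [y [_ fy]] : exists y, e z y /\ (f y).+1 = f z by apply: f_desc; rewrite fz.
  rewrite fz in fy; case: fy => fy; exact: (IH y fy t).
have sub : {subset iota 0 (f x).+1 <= undup (map f (enum T))}.
  move=> t; rewrite mem_iota add0n /= => ht.
  have [y <-] := values_below _ x erefl t ht.
  by rewrite mem_undup; apply: map_f; rewrite mem_enum.
have := uniq_leq_size (iota_uniq 0 (f x).+1) sub.
rewrite size_iota => H; apply: (leq_trans H).
by rewrite cardE -(size_map f); apply: size_undup.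
Qed.

Lemma dist_potential (T : finType) (e : rel T) (v : T) (f : T -> nat) :
  f v = 0 -> (forall x, f x = 0 -> x = v) ->
  (forall x y, e x y -> f x <= (f y).+1) ->
  (forall x, 0 < f x -> exists y, e x y /\ (f y).+1 = f x) ->
  forall x, dist e x v = f x.
Proof.
move=> f0 f0_v f_lip f_desc x; rewrite /dist.
set P := fun k => walkb e k x v.
have Pfx : P (f x) := walk_along_potential f0_v f_desc x.
have fx_lt := potential_lt_card f_desc x.
have hasP : has P (iota 0 #|T|) by apply/hasP; exists (f x); rewrite ?mem_iota.
have find_lt : find P (iota 0 #|T|) < #|T|.
  by rewrite -[X in _ < X](size_iota 0) -has_find.
have := nth_find 0 hasP; rewrite nth_iota // add0n => /(walk_length_ge_potential f0 f_lip).
case: (ltnP (f x) (find P (iota 0 #|T|))) => [lt_fx _ | le_find le_fx]; last by lia.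
by have := before_find 0 lt_fx; rewrite nth_iota // add0n Pfx.
Qed.

(* Covering a path: each edge of an r-path has an endpoint in C, so counting edges
   against the vertices of C (endpoints of the path counted once) gives the bound. *)
Lemma path_cover_count (T : eqType) (r : rel T) (C : pred T) :
  (forall x y, r x y -> C x || C y) ->
  forall s x, path r x s ->
  size s + C x + C (last x s) <= 2 * count C (x :: s).
Proof.
move=> r_cov; elim=> [|y s IH] x /=; first by rewrite addn0; case: (C x).
case/andP=> /r_cov Cxy /IH; rewrite /= => H.
move: Cxy H; case: (C x); case: (C y) => //= _; lia.
Qed.

Lemma vertex_coverP (T : finType) (e : rel T) (S : {set T}) :
  vertex_cover e S -> forall x y, e x y -> (x \in S) || (y \in S).
Proof. by move=> /forallP covS x y; move: (covS x) => /forallP /(_ y) /implyP. Qed.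

Lemma big_minn_le (I : eqType) (r : seq I) (P : pred I) (F : I -> nat) x i0 :
  i0 \in r -> P i0 -> \big[minn/x]_(i <- r | P i) F i <= F i0.
Proof.
elim: r => // a r IH; rewrite inE big_cons => /orP[/eqP <- -> | r_i0 P_i0].
  exact: geq_minl.
case: (P a); last exact: IH.
by apply: leq_trans (geq_minr _ _) (IH r_i0 P_i0).
Qed.

Lemma vertex_cover_numberE (T : finType) (e : rel T) (S : {set T}) (k : nat) :
  vertex_cover e S -> #|S| = k -> (forall C : {set T}, vertex_cover e C -> k <= #|C|) ->
  vertex_cover_number e = k.
Proof.
move=> covS <- lb; apply/eqP; rewrite eqn_leq; apply/andP; split.
  exact: (big_minn_le (fun S0 : {set T} => #|S0|) _ (mem_index_enum S) covS).
apply: (big_ind (fun x => #|S| <= x)); first exact: max_card.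
- by move=> a b ha hb; rewrite leq_min ha hb.
- exact: lb.
Qed.

Lemma sum_indicator m k : k < m -> \sum_(i < m) (i == k :> nat) = 1.
Proof.
move=> lt_km; rewrite (bigD1 (Ordinal lt_km)) //= eqxx big1 // => j.
by rewrite -val_eqE /=; case: eqP.
Qed.

Lemma last_iota a l : last a (iota a.+1 l) = a + l.
Proof. by elim: l a => [|l IH] a /=; rewrite ?addn0 // IH addnS. Qed.

Lemma path_iota (r : rel nat) a l :
  (forall t, a <= t < a + l -> r t t.+1) -> path r a (iota a.+1 l).
Proof.
elim: l a => [|l IH] a h //=; apply/andP; split; first by apply: h; lia.
by apply: IH => t ht; apply: h; lia.
Qed.

Definition ring_adj (N p q : nat) : bool := (q == (p + 1) %% N) || (p == (q + 1) %% N).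
Definition gap (p q : nat) : nat := (p - q) + (q - p).
Definition ring_dist (N p q : nat) : nat := minn (gap p q) (N - gap p q).

Lemma succ_mod N p : p < N -> (p + 1) %% N = if p + 1 == N then 0 else p + 1.
Proof.
move=> ltpN; case: eqP => [->|ne]; first by rewrite modnn.
by rewrite modn_small //; lia.
Qed.

Lemma ring_adjE N p q : p < N -> q < N ->
  ring_adj N p q <->
  (q = p + 1 \/ p = q + 1 \/ (p = N - 1 /\ q = 0) \/ (q = N - 1 /\ p = 0)).
Proof.
move=> hp hq; rewrite /ring_adj (succ_mod hp) (succ_mod hq).
case: ifP => /eqP e1; case: ifP => /eqP e2;
  (split => [/orP [/eqP|/eqP]|h]; [lia|lia|]);
  apply/orP; (case: eqP => h1; [by left|right; apply/eqP; lia]).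
Qed.

Lemma ring_dist_sym N p q : ring_dist N p q = ring_dist N q p.
Proof. rewrite /ring_dist /gap; lia. Qed.

Lemma ring_dist_xx N p : ring_dist N p p = 0.
Proof. rewrite /ring_dist /gap; lia. Qed.

Lemma ring_dist_eq0 N p q : p < N -> q < N -> (ring_dist N p q == 0) = (p == q).
Proof. move=> hp hq; apply/eqP/eqP; rewrite /ring_dist /gap; lia. Qed.

Lemma ring_dist_lipschitz N p q t : p < N -> q < N -> t < N ->
  ring_adj N p q -> ring_dist N p t <= (ring_dist N q t).+1.
Proof. move=> hp hq ht /(ring_adjE hp hq); rewrite /ring_dist /gap; lia. Qed.

Lemma ring_dist_descent N p t : p < N -> t < N -> 0 < ring_dist N p t ->
  exists q, [/\ q < N, ring_adj N p q & (ring_dist N q t).+1 = ring_dist N p t].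
Proof.
move=> hp ht pos_d.
have step : forall q, q < N ->
    (q = p + 1 \/ p = q + 1 \/ (p = N - 1 /\ q = 0) \/ (q = N - 1 /\ p = 0)) ->
    (ring_dist N q t).+1 = ring_dist N p t ->
  exists q, [/\ q < N, ring_adj N p q & (ring_dist N q t).+1 = ring_dist N p t].
  by move=> q hq ha hc; exists q; split => //; apply/(ring_adjE hp hq).
rewrite /ring_dist /gap in step pos_d *.
case: (ltnP p t) => hpt.
  case: (leqP (t - p).*2 N) => hk; first by apply: (step (p + 1)); lia.
  case: (posnP p) => hp0; first by apply: (step (N - 1)); lia.
  by apply: (step (p - 1)); lia.
case: (leqP (p - t).*2 N) => hk; first by apply: (step (p - 1)); lia.
case: (ltnP (p + 1) N) => hp1; first by apply: (step (p + 1)); lia.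
by apply: (step 0); lia.
Qed.

Lemma ring_dist_le_rad K p q : p < K.*2.+1 -> q < K.*2.+1 -> ring_dist K.*2.+1 p q <= K.
Proof. rewrite /ring_dist /gap; lia. Qed.

Lemma ring_dist_0_opp K : ring_dist K.*2.+1 0 K.+1 = K.
Proof. rewrite /ring_dist /gap; lia. Qed.

(* The antipodal walk t |-> t K mod (2K+1): consecutive positions are at distance K,
   and it visits the 2K+1 positions without repetition, as 2K+1 and K are coprime. *)
Definition antipodal (K t : nat) : nat := (t * K) %% K.*2.+1.

Lemma antipodal_lt K t : antipodal K t < K.*2.+1.
Proof. by rewrite /antipodal ltn_mod. Qed.

Lemma antipodal_inj K t1 t2 : t1 < K.*2.+1 -> t2 < K.*2.+1 ->
  antipodal K t1 = antipodal K t2 -> t1 = t2.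
Proof.
wlog le12 : t1 t2 / t1 <= t2.
  move=> W h1 h2 e; case: (leqP t1 t2) => h; first exact: W.
  by apply/esym; apply: W => //; exact: ltnW.
have coprimeK : coprime K.*2.+1 K by rewrite /coprime gcdnC -addn1 -mul2n gcdnMDl gcdn1.
move=> h1 h2 /eqP; rewrite /antipodal eq_sym eqn_mod_dvd ?leq_mul2r ?le12 ?orbT // -mulnBl.
rewrite Gauss_dvdl //.
case: (posnP (t2 - t1)) => h; first by lia.
by move/(dvdn_leq h); lia.
Qed.

Lemma antipodal0 K : antipodal K 0 = 0.
Proof. by rewrite /antipodal mul0n mod0n. Qed.

Lemma antipodal1 K : antipodal K 1 = K.
Proof. by rewrite /antipodal mul1n modn_small //; lia. Qed.

Lemma antipodal_last K : 1 <= K -> antipodal K K.*2 = K.+1.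
Proof.
move=> K_gt0; rewrite /antipodal (_ : K.*2 * K = (K - 1) * K.*2.+1 + K.+1); last by nia.
by rewrite modnMDl modn_small //; lia.
Qed.

Lemma antipodal_pred_last K : 1 <= K -> antipodal K (K.*2 - 1) = 1.
Proof.
move=> K_gt0; rewrite /antipodal (_ : (K.*2 - 1) * K = (K - 1) * K.*2.+1 + 1); last by nia.
by rewrite modnMDl modn_small //; lia.
Qed.

Lemma ring_dist_antipodal K t : 1 <= K ->
  ring_dist K.*2.+1 (antipodal K t) (antipodal K t.+1) = K.
Proof.
move=> K_gt0; rewrite /antipodal mulSn addnC -modnDml.
have := antipodal_lt K t; rewrite /antipodal; move: (t * K %% K.*2.+1) => p hp.
case: (ltnP (p + K) K.*2.+1) => h; first by rewrite modn_small // /ring_dist /gap; lia.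
rewrite (_ : p + K = (p + K - K.*2.+1) + K.*2.+1); last lia.
by rewrite modnDr modn_small /ring_dist /gap; lia.
Qed.

Lemma antipodal_eq0 K t : t < K.*2.+1 -> (antipodal K t == 0) = (t == 0).
Proof.
move=> ht; apply/eqP/eqP => [e|->]; last exact: antipodal0.
by apply: (antipodal_inj (t2 := 0) ht) => //; rewrite antipodal0.
Qed.

Lemma antipodal_eq_opp K t : 1 <= K -> t < K.*2.+1 ->
  (antipodal K t == K.+1) = (t == K.*2).
Proof.
move=> K_gt0 ht; apply/eqP/eqP => [e|->]; last exact: antipodal_last.
by apply: (antipodal_inj (t2 := K.*2) ht) => //; rewrite antipodal_last.
Qed.

Section ChainCycle.

Variables (m : nat) (n : nat -> nat).
Local Notation V := (chain_vert m n).
Local Notation adj := (chain_adj m n).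
Local Notation SR := (strong_resolving_graph (chain_adj m n)).

Lemma cyc_vert_inj (a b : cyc_vert m n) :
  tag a = tag b :> nat -> val (tagged a) = val (tagged b) -> a = b.
Proof. by case: a => i p; case: b => j q /= /val_inj ji; subst j => /val_inj ->. Qed.

Lemma cyc_vert_eqE (a b : cyc_vert m n) :
  (a == b) = (tag a == tag b :> nat) && (val (tagged a) == val (tagged b)).
Proof. by apply/eqP/andP => [->//|[/eqP e1 /eqP e2]]; exact: cyc_vert_inj. Qed.

Definition cidx (x : V) : nat := tag (val x).
Definition cpos (x : V) : nat := val (tagged (val x)).

Lemma cidx_lt (x : V) : cidx x < m.
Proof. by rewrite /cidx. Qed.

Lemma cpos_lt (x : V) : cpos x < n (cidx x).+1.
Proof. by rewrite /cpos /cidx; case: (tagged (val x)). Qed.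

(* Position 0 of a cycle other than the first is represented in the previous cycle. *)
Lemma cpos_canon (x : V) : (cidx x == 0) || (cpos x != 0).
Proof. by case: x => a /=; rewrite /canon /cidx /cpos /= negb_and -eqn0Ngt. Qed.

Lemma chain_vert_ext (x y : V) : cidx x = cidx y -> cpos x = cpos y -> x = y.
Proof. by move=> e1 e2; apply: val_inj; apply: cyc_vert_inj. Qed.

Lemma chain_vert_at i p : i < m -> p < n i.+1 -> (i == 0) || (p != 0) ->
  exists x : V, cidx x = i /\ cpos x = p.
Proof.
move=> hi hp hc.
pose a : cyc_vert m n := @Tagged _ (Ordinal hi) (fun i : 'I_m => 'I_(n i.+1)) (Ordinal hp).
have ca : canon a by rewrite /canon /= negb_and -eqn0Ngt.
by exists (exist _ a ca).
Qed.

Definition glued_at (i p : nat) (x : V) : bool :=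
  ((i == cidx x) && (p == cpos x)) ||
  [&& 0 < i, p == 0, (cidx x).+1 == i & cpos x == (n i + 1)./2].

Lemma glued_at_self (x : V) : glued_at (cidx x) (cpos x) x.
Proof. by rewrite /glued_at !eqxx. Qed.

Lemma chain_adjE (x y : V) :
  adj x y <-> exists i p q, [/\ i < m, p < n i.+1, q < n i.+1 &
                              [&& ring_adj (n i.+1) p q, glued_at i p x & glued_at i q y]].
Proof.
have glued_atE (a : cyc_vert m n) (z : V) :
    glued a (val z) = glued_at (tag a) (val (tagged a)) z.
  by rewrite /glued /glued_at cyc_vert_eqE.
split.
  case/existsP=> a /existsP[b /and3P[hab hx hy]].
  move: hab; rewrite /cyc_adj => /andP[/eqP ht hp].
  exists (tag a), (val (tagged a)), (val (tagged b)); split.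
  - exact: ltn_ord.
  - exact: ltn_ord.
  - by case: b ht {hy hp} => /= j q ->.
  - by rewrite /ring_adj !addn1 hp -glued_atE hx ht -glued_atE hy.
case=> i [p [q [hi hp hq /and3P[hpq hx hy]]]].
pose a : cyc_vert m n := @Tagged _ (Ordinal hi) (fun i : 'I_m => 'I_(n i.+1)) (Ordinal hp).
pose b : cyc_vert m n := @Tagged _ (Ordinal hi) (fun i : 'I_m => 'I_(n i.+1)) (Ordinal hq).
apply/existsP; exists a; apply/existsP; exists b.
rewrite !glued_atE /= hx hy /cyc_adj /= eqxx /= andbT.
by rewrite /ring_adj !addn1 in hpq.
Qed.

Hypothesis odd_cycles : forall i, i < m -> 5 <= n i.+1 /\ odd (n i.+1).

(* Cycle i has length 2 K_i + 1 with K_i = [rad i]; its position [gate i] = K_i + 1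
   is position 0 of cycle i+1. *)
Definition rad (i : nat) : nat := (n i.+1)./2.
Definition gate (i : nat) : nat := (n i.+1 + 1)./2.
Definition rad_sum (a b : nat) : nat := \sum_(a <= l < b) rad l.

Lemma size_rad i : i < m -> n i.+1 = (rad i).*2.+1.
Proof.
by move=> /odd_cycles [_ o]; rewrite /rad -[in LHS](odd_double_half (n i.+1)) o; lia.
Qed.

Lemma gate_rad i : i < m -> gate i = (rad i).+1.
Proof. by move=> hi; rewrite /gate (size_rad hi) addn1 -doubleS doubleK. Qed.

Lemma rad_ge2 i : i < m -> 2 <= rad i.
Proof. by move=> hi; have [h _] := odd_cycles hi; move: h (size_rad hi); lia. Qed.

Lemma ring_dist_0_gate i : i < m -> ring_dist (n i.+1) 0 (gate i) = rad i.
Proof. by move=> hi; rewrite (size_rad hi) (gate_rad hi) ring_dist_0_opp. Qed.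

Lemma rad_sum_nil a : rad_sum a a = 0.
Proof. by rewrite /rad_sum big_geq. Qed.

Lemma rad_sum_cons a b : a < b -> rad_sum a b = rad a + rad_sum a.+1 b.
Proof. by move=> h; rewrite /rad_sum big_ltn. Qed.

Lemma rad_sum_rcons a b : a <= b -> rad_sum a b.+1 = rad_sum a b + rad b.
Proof. by move=> h; rewrite /rad_sum big_nat_recr. Qed.

(* The distance formula.  A shortest walk from position p of cycle i to position q of
   cycle j leaves cycle i through [exit_pos i j q] and then pays [exit_cost i j q]. *)
Definition exit_pos (i j q : nat) : nat :=
  if i == j then q else if i < j then gate i else 0.

Definition exit_cost (i j q : nat) : nat :=
  if i == j then 0
  else if i < j then rad_sum i.+1 j + ring_dist (n j.+1) 0 q
  else ring_dist (n j.+1) q (gate j) + rad_sum j.+1 i.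

Definition pdist (i p j q : nat) : nat :=
  exit_cost i j q + ring_dist (n i.+1) p (exit_pos i j q).

Lemma pdist_sym i p j q : pdist i p j q = pdist j q i p.
Proof.
rewrite /pdist /exit_cost /exit_pos; case: (ltngtP i j) => h.
- by rewrite (ring_dist_sym _ 0); lia.
- by rewrite (ring_dist_sym _ 0); lia.
- by subst j; rewrite ring_dist_sym.
Qed.

Lemma exit_pos_lt i j q : i < m -> j < m -> q < n j.+1 -> exit_pos i j q < n i.+1.
Proof.
move=> hi hj hq; rewrite /exit_pos; case: eqP => [->//|_].
by have := rad_ge2 hi; have := size_rad hi; have := gate_rad hi; case: ifP => _; lia.
Qed.

(* Position 0 of cycle i > 0 and the gate of cycle i-1 are the same vertex; the formula
   agrees on both descriptions. *)
Lemma pdist_gate i j q : 0 < i < m -> j < m -> q < n j.+1 ->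
  pdist i 0 j q = pdist i.-1 (gate i.-1) j q.
Proof.
case: i => // i /= hi1 hj hq; have hi : i < m by lia.
have c1 := ring_dist_0_gate hi1; have c0 := ring_dist_0_gate hi.
rewrite /pdist /exit_cost /exit_pos; case: (ltngtP i.+1 j) => h1.
- rewrite (ltn_eqF (ltnW h1)) (rad_sum_cons h1) ring_dist_xx; lia.
- case: (ltngtP i j) => h2; first lia.
  + rewrite (rad_sum_rcons h2) (ring_dist_sym _ (gate i)) c0 ring_dist_xx; lia.
  + by subst j; rewrite rad_sum_nil ring_dist_xx ring_dist_sym !addn0.
- by subst j; rewrite (ltn_eqF (ltnSn i)) rad_sum_nil ring_dist_xx addn0.
Qed.

Lemma pdist_glued i p (x : V) j q : i < m -> glued_at i p x -> j < m -> q < n j.+1 ->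
  pdist i p j q = pdist (cidx x) (cpos x) j q.
Proof.
move=> hi /orP[/andP[/eqP-> /eqP->]//|/and4P[i0 /eqP-> /eqP e1 /eqP e2]] hj hq.
by rewrite (pdist_gate _ hj hq) ?i0 // e2 -e1 /gate.
Qed.

Lemma glued_at_exists i p : i < m -> p < n i.+1 -> exists y : V, glued_at i p y.
Proof.
move=> hi hp; case: (boolP ((i == 0) || (p != 0))) => hc.
  by have [y [e1 e2]] := chain_vert_at hi hp hc; exists y; rewrite /glued_at e1 e2 !eqxx.
move: hc; rewrite negb_or negbK => /andP[i0 /eqP p0].
case: i i0 hi hp => // i _ hi hp; have hi' : i < m by lia.
have hg : gate i < n i.+1.
  by rewrite (gate_rad hi') (size_rad hi'); have := rad_ge2 hi'; lia.
have hc : (i == 0) || (gate i != 0) by rewrite (gate_rad hi') orbT.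
have [y [e1 e2]] := chain_vert_at hi' hg hc; exists y.
by rewrite /glued_at e1 e2 p0 /gate !eqxx /= orbT.
Qed.

Definition cdist (x y : V) : nat := pdist (cidx x) (cpos x) (cidx y) (cpos y).

Lemma cdist_lipschitz (x y v : V) : adj x y -> cdist x v <= (cdist y v).+1.
Proof.
move=> /chain_adjE[i [p [q [hi hp hq /and3P[hpq hx hy]]]]].
rewrite /cdist -(pdist_glued hi hx (cidx_lt v) (cpos_lt v)).
rewrite -(pdist_glued hi hy (cidx_lt v) (cpos_lt v)) /pdist -addnS leq_add2l.
have ht := exit_pos_lt hi (cidx_lt v) (cpos_lt v).
exact: ring_dist_lipschitz.
Qed.

Lemma cdist_step i p (x v : V) : i < m -> p < n i.+1 -> glued_at i p x ->
  0 < ring_dist (n i.+1) p (exit_pos i (cidx v) (cpos v)) ->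
  exists y, adj x y /\ (cdist y v).+1 = cdist x v.
Proof.
move=> hi hp hx hpos.
have ht := exit_pos_lt hi (cidx_lt v) (cpos_lt v).
have [q [hq hpq hd]] := ring_dist_descent hp ht hpos.
have [y hy] := glued_at_exists hi hq.
exists y; split; first by apply/chain_adjE; exists i, p, q; split => //; rewrite hpq hx hy.
rewrite /cdist -(pdist_glued hi hx (cidx_lt v) (cpos_lt v)).
by rewrite -(pdist_glued hi hy (cidx_lt v) (cpos_lt v)) /pdist -hd addnS.
Qed.

(* [cdist x v] decreases along some edge out of every x other than v: step towards the
   exit position inside the cycle of x, or, if x is that exit (the gate to the next
   cycle), step inside the next cycle, where x is position 0. *)
Lemma cdist_descent (x v : V) : 0 < cdist x v ->
  exists y, adj x y /\ (cdist y v).+1 = cdist x v.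
Proof.
move=> hpos; have hx := cidx_lt x; have hpx := cpos_lt x.
have ht := exit_pos_lt hx (cidx_lt v) (cpos_lt v).
set e := exit_pos (cidx x) (cidx v) (cpos v) in ht *.
case: (posnP (ring_dist (n (cidx x).+1) (cpos x) e)) => hc;
  last exact: (cdist_step hx hpx (glued_at_self x) hc).
rewrite {}/e in ht hc.
rewrite /cdist /pdist hc addn0 in hpos.
move: hc => /eqP; rewrite ring_dist_eq0 // => /eqP ep.
move: hpos ep; rewrite /exit_cost /exit_pos.
case: eqP => // ne; case: (ltnP (cidx x) (cidx v)) => hlt hpos ep; last first.
  by have := cpos_canon x; rewrite ep eqxx orbF => /eqP c0; lia.
have hi1 : (cidx x).+1 < m by have := cidx_lt v; lia.
have hp1 : 0 < n (cidx x).+2 by have := size_rad hi1; lia.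
have hr : glued_at (cidx x).+1 0 x by rewrite /glued_at /= !eqxx /= ep /gate eqxx orbT.
apply: (cdist_step hi1 hp1 hr).
have ht1 := exit_pos_lt hi1 (cidx_lt v) (cpos_lt v).
rewrite lt0n ring_dist_eq0 // /exit_pos; case: ((cidx x).+1 =P cidx v) => [e|ne1].
  by have := cpos_canon v; rewrite -e /= eq_sym.
by rewrite (_ : (cidx x).+1 < cidx v) ?(gate_rad hi1) //; lia.
Qed.

(* Only v itself is at distance 0: another cycle always costs a positive amount. *)
Lemma cdist_eq0 (x v : V) : cdist x v = 0 -> x = v.
Proof.
have hx := cidx_lt x; have hv := cidx_lt v; have px := cpos_lt x; have pv := cpos_lt v.
have nx0 : 0 < n (cidx x).+1 by lia.
have nv0 : 0 < n (cidx v).+1 by lia.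
rewrite /cdist /pdist /exit_cost /exit_pos; case: eqP => [e|ne].
  move: px; rewrite add0n e => px /eqP; rewrite ring_dist_eq0 // => /eqP.
  exact: chain_vert_ext.
case: ifP => hlt h.
  have /eqP : ring_dist (n (cidx v).+1) 0 (cpos v) = 0 by lia.
  rewrite ring_dist_eq0 // => /eqP e.
  by have := cpos_canon v; rewrite -e eqxx orbF => /eqP c0; lia.
have /eqP : ring_dist (n (cidx x).+1) (cpos x) 0 = 0 by lia.
rewrite ring_dist_eq0 // => /eqP e.
by have := cpos_canon x; rewrite e eqxx orbF => /eqP c0; lia.
Qed.

Lemma dist_cdist (x v : V) : dist adj x v = cdist x v.
Proof.
apply: (dist_potential (f := fun x => cdist x v)).
- by rewrite /cdist /pdist /exit_cost /exit_pos eqxx ring_dist_xx.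
- by move=> y; apply: cdist_eq0.
- by move=> a b; apply: cdist_lipschitz.
- by move=> a; apply: cdist_descent.
Qed.

(* The gates are the cut vertices; every other vertex has both neighbours in its own
   cycle. *)
Definition cut_vertex (x : V) : bool := (cpos x == gate (cidx x)) && ((cidx x).+1 < m).

Lemma adj_same_cycle (x w : V) : ~~ cut_vertex x -> adj x w ->
  exists q, [/\ q < n (cidx x).+1, ring_adj (n (cidx x).+1) (cpos x) q
              & glued_at (cidx x) q w].
Proof.
move=> ncx /chain_adjE[i [p [q [hi hp hq /and3P[hpq hx hw]]]]].
case/orP: hx => [/andP[/eqP ei /eqP ep]|/and4P[i0 /eqP p0 /eqP e1 /eqP e2]].
  by subst i p; exists q.
by move: ncx; rewrite /cut_vertex e2 /gate -e1 /= eqxx /=; lia.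
Qed.

(* A non-cut vertex x at cyclic distance K from the exit towards v is maximally
   distant from v: a neighbour w of x can only move closer to that exit. *)
Lemma max_dist_of_far (x v : V) : ~~ cut_vertex x ->
  ring_dist (n (cidx x).+1) (cpos x) (exit_pos (cidx x) (cidx v) (cpos v)) = rad (cidx x) ->
  max_dist_from adj x v.
Proof.
move=> ncx far; apply/forallP => w; apply/implyP => xw.
rewrite !dist_cdist /cdist pdist_sym.
have [q [hq hxq hw]] := adj_same_cycle ncx xw.
rewrite -(pdist_glued (cidx_lt x) hw (cidx_lt v) (cpos_lt v)) /pdist leq_add2l far.
have ht := exit_pos_lt (cidx_lt x) (cidx_lt v) (cpos_lt v).
by move: hq ht; rewrite (size_rad (cidx_lt x)); exact: ring_dist_le_rad.
Qed.

Lemma sr_antipodal (x y : V) : cidx x = cidx y -> ~~ cut_vertex x -> ~~ cut_vertex y ->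
  ring_dist (n (cidx x).+1) (cpos x) (cpos y) = rad (cidx x) -> SR x y.
Proof.
move=> e ncx ncy far; have K2 := rad_ge2 (cidx_lt x).
apply/and3P; split.
- by apply/eqP => exy; subst y; move: far; rewrite ring_dist_xx; lia.
- by apply: max_dist_of_far => //; rewrite /exit_pos e eqxx -e.
- by apply: max_dist_of_far => //; rewrite /exit_pos e eqxx -e ring_dist_sym.
Qed.

Lemma sr_across (x y : V) : cidx x < cidx y -> cpos x <= 1 -> ~~ cut_vertex y ->
  (cpos y == rad (cidx y)) || (cpos y == (rad (cidx y)).+1) -> SR x y.
Proof.
move=> lt_xy low ncy high.
have K2x := rad_ge2 (cidx_lt x); have K2y := rad_ge2 (cidx_lt y).
have sx := size_rad (cidx_lt x); have sy := size_rad (cidx_lt y).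
have gx := gate_rad (cidx_lt x).
apply/and3P; split.
- by apply/eqP => exy; move: lt_xy; rewrite exy ltnn.
- apply: max_dist_of_far; first by rewrite /cut_vertex gx; apply/nandP; left; lia.
  by rewrite /exit_pos (ltn_eqF lt_xy) lt_xy gx sx /ring_dist /gap; lia.
- apply: max_dist_of_far => //.
  by rewrite /exit_pos (gtn_eqF lt_xy) ltnNge (ltnW lt_xy) /= sy /ring_dist /gap; lia.
Qed.

(* Moving from position p in 2..K+1 to p-1 moves away from every later cycle. *)
Lemma not_max_dist_later (x y : V) : cidx x < cidx y ->
  2 <= cpos x <= (rad (cidx x)).+1 -> ~~ max_dist_from adj x y.
Proof.
move=> lt_xy /andP[h1 h2].
have hx := cidx_lt x; have px := cpos_lt x.
have sx := size_rad hx; have gx := gate_rad hx; have K2x := rad_ge2 hx.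
have hq : cpos x - 1 < n (cidx x).+1 by lia.
have hc : (cidx x == 0) || (cpos x - 1 != 0) by apply/orP; right; apply/eqP; lia.
have [w [ew pw]] := chain_vert_at hx hq hc.
have xw : adj x w.
  apply/chain_adjE; exists (cidx x), (cpos x), (cpos x - 1); split => //.
  rewrite glued_at_self /glued_at ew pw !eqxx /= andbT /ring_adj.
  by apply/orP; right; rewrite subnK ?modn_small //; lia.
apply/forallP => /(_ w); rewrite xw /= !dist_cdist /cdist pdist_sym ew pw.
by rewrite /pdist leq_add2l /exit_pos (ltn_eqF lt_xy) lt_xy gx sx /ring_dist /gap; lia.
Qed.

(* Inside one cycle, for 2 <= p < q <= K+1, moving from q to q+1 moves away from p. *)
Lemma not_max_dist_outward (x y : V) : cidx x = cidx y ->
  2 <= cpos x -> cpos x < cpos y -> cpos y <= (rad (cidx y)).+1 -> ~~ max_dist_from adj y x.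
Proof.
move=> e h1 h2 h3.
have hy := cidx_lt y; have py := cpos_lt y.
have sy := size_rad hy; have K2y := rad_ge2 hy.
have hq : cpos y + 1 < n (cidx y).+1 by lia.
have hc : (cidx y == 0) || (cpos y + 1 != 0) by apply/orP; right; apply/eqP; lia.
have [w [ew pw]] := chain_vert_at hy hq hc.
have yw : adj y w.
  apply/chain_adjE; exists (cidx y), (cpos y), (cpos y + 1); split => //.
  by rewrite glued_at_self /glued_at ew pw !eqxx /= andbT /ring_adj (modn_small hq) eqxx.
apply/forallP => /(_ w); rewrite yw /= !dist_cdist /cdist ew pw e.
by rewrite /pdist /exit_cost /exit_pos !eqxx sy /ring_dist /gap; lia.
Qed.

Definition inner (x : V) : bool := (2 <= cpos x) && (cpos x <= (rad (cidx x)).+1).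

Lemma inner_independent (x y : V) : inner x -> inner y -> ~~ SR x y.
Proof.
move=> ix iy; rewrite /strong_resolving_graph /mutually_max_dist.
case: (ltngtP (cidx x) (cidx y)) => e.
- by rewrite (negbTE (not_max_dist_later e ix)) andbF.
- by rewrite (negbTE (not_max_dist_later e iy)) !andbF.
move: ix iy; rewrite /inner => /andP[hx1 hx2] /andP[hy1 hy2].
case: (ltngtP (cpos x) (cpos y)) => ep.
- by rewrite (negbTE (not_max_dist_outward e hx1 ep hy2)) !andbF.
- by rewrite (negbTE (not_max_dist_outward (esym e) hy1 ep hx2)) !andbF.
- by rewrite (chain_vert_ext e ep) eqxx.
Qed.

Lemma card_by_cycle (A : {set V}) : #|A| = \sum_(i < m) #|[set x in A | cidx x == i]|.
Proof.
rewrite -sum1_card (partition_big (fun x : V => tag (val x)) predT) //=.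
by apply: eq_bigr => i _; rewrite -sum1_card; apply: eq_bigl => x; rewrite !inE.
Qed.

Lemma card_cycle_positions i (Q : pred nat) : i < m ->
  #|[set x : V | (cidx x == i) && Q (cpos x)]| =
  count (fun p => ((i == 0) || (p != 0)) && Q p) (iota 0 (n i.+1)).
Proof.
move=> hi; set A := [set x : V | _].
pose P := fun p => ((i == 0) || (p != 0)) && Q p.
have uniq_pos : uniq (map cpos (enum A)).
  rewrite map_inj_in_uniq ?enum_uniq // => x y.
  rewrite !mem_enum !inE => /andP[/eqP ex _] /andP[/eqP ey _] e.
  by apply: chain_vert_ext => //; rewrite ex ey.
have uniq_P : uniq (filter P (iota 0 (n i.+1))) by rewrite filter_uniq ?iota_uniq.
have same : map cpos (enum A) =i filter P (iota 0 (n i.+1)).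
  move=> p; rewrite mem_filter mem_iota add0n /=.
  apply/mapP/andP => [[x] | [Pp hp]].
    rewrite mem_enum inE => /andP[/eqP ex Qx] ->.
    by rewrite /P -ex cpos_canon Qx cpos_lt.
  move: Pp; rewrite /P => /andP[hc Qp].
  have [x [ex epx]] := chain_vert_at hi hp hc.
  by exists x => //; rewrite mem_enum inE ex eqxx epx Qp.
by rewrite cardE -(size_map cpos) (perm_size (uniq_perm uniq_pos uniq_P same)) size_filter.
Qed.

Lemma outer_is_cover : vertex_cover SR [set x | ~~ inner x].
Proof.
apply/forallP => u; apply/forallP => v; apply/implyP => uv; rewrite !inE -negb_and.
by apply/negP => /andP[iu iv]; move: uv; rewrite (negbTE (inner_independent iu iv)).
Qed.

(* Cycle i has (i == 0) + K_i outer vertices: positions 0 (first cycle only), 1 and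
   K+2..2K. *)
Lemma card_outer_cycle i : i < m ->
  #|[set x in [set x : V | ~~ inner x] | cidx x == i]| = (i == 0) + rad i.
Proof.
move=> hi; have K2 := rad_ge2 hi.
have -> : [set x in [set x : V | ~~ inner x] | cidx x == i] =
          [set x : V | (cidx x == i) && ~~ ((2 <= cpos x) && (cpos x <= (rad i).+1))].
  by apply/setP => x; rewrite !inE /inner andbC; case: eqP => // ->.
rewrite (card_cycle_positions (fun p => ~~ ((2 <= p) && (p <= (rad i).+1))) hi).
rewrite (size_rad hi).
have -> : iota 0 (rad i).*2.+1 = [:: 0; 1] ++ iota 2 (rad i) ++ iota (rad i).+2 (rad i - 1).
  rewrite (_ : (rad i).*2.+1 = 2 + (rad i + (rad i - 1))); last lia.
  by rewrite !iotaD (_ : 2 + rad i = (rad i).+2) //; lia.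
rewrite !count_cat /= (@eq_in_count _ _ pred0) ?count_pred0; last first.
  by move=> p; rewrite mem_iota => hp; apply/negbTE; lia.
rewrite (@eq_in_count _ _ predT) ?count_predT ?size_iota; last first.
  by move=> p; rewrite mem_iota => hp; apply/andP; split; [apply/orP; right|]; lia.
by case: (i == 0) => /=; lia.
Qed.

Lemma card_outer : 0 < m -> #|[set x : V | ~~ inner x]| = (\sum_(i < m) rad i).+1.
Proof.
move=> m_gt0; rewrite card_by_cycle (eq_bigr _ (fun i _ => card_outer_cycle (ltn_ord i))).
by rewrite big_split /= sum_indicator.
Qed.

Section LowerBound.

Hypothesis two_cycles : 1 < m.
Variable C : {set V}.
Hypothesis C_cover : vertex_cover SR C.
Variable x0 : V.

(* The vertex at position p of cycle i (x0 is only a default value). *)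
Definition vertex_at (i p : nat) : V := odflt x0 [pick x | (cidx x == i) && (cpos x == p)].

Lemma vertex_at_spec i p : i < m -> p < n i.+1 -> (i == 0) || (p != 0) ->
  cidx (vertex_at i p) = i /\ cpos (vertex_at i p) = p.
Proof.
move=> hi hp hc; rewrite /vertex_at; case: pickP => [x /andP[/eqP -> /eqP ->] //|none].
have [x [e1 e2]] := chain_vert_at hi hp hc.
by have := none x; rewrite e1 e2 !eqxx.
Qed.

Definition walk_vertex (i t : nat) : V := vertex_at i (antipodal (rad i) t).

(* Positions visited by the antipodal walk on steps a..a+l of cycle i are proper,
   non-cut vertices; consecutive ones are then adjacent in G_SR. *)
Definition walk_ok (i a l : nat) : Prop :=
  forall t, a <= t <= a + l ->
    ((i == 0) || (antipodal (rad i) t != 0)) &&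
    ((antipodal (rad i) t != (rad i).+1) || (i.+1 == m)).

Lemma walk_vertex_spec i a l t : i < m -> walk_ok i a l -> a <= t <= a + l ->
  [/\ cidx (walk_vertex i t) = i,
      cpos (walk_vertex i t) = antipodal (rad i) t
    & ~~ cut_vertex (walk_vertex i t)].
Proof.
move=> hi ok ht; have [canon_t noncut_t] := andP (ok t ht).
have hp : antipodal (rad i) t < n i.+1 by rewrite (size_rad hi) antipodal_lt.
have [e1 e2] := vertex_at_spec hi hp canon_t.
split => //; rewrite /cut_vertex e1 e2 (gate_rad hi).
by case/orP: noncut_t => [/negbTE -> // | /eqP ->]; rewrite ltnn andbF.
Qed.

Lemma antipodal_sr_path i a l : i < m -> walk_ok i a l ->
  path SR (walk_vertex i a) (map (walk_vertex i) (iota a.+1 l)).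
Proof.
move=> hi ok; rewrite path_map; apply: path_iota => t ht.
have [e1 e2 nc1] := walk_vertex_spec hi ok (ltac:(lia) : a <= t <= a + l).
have [e3 e4 nc2] := walk_vertex_spec hi ok (ltac:(lia) : a <= t.+1 <= a + l).
apply: sr_antipodal => //; first by rewrite e1 e3.
by rewrite e1 e2 e4 (size_rad hi) ring_dist_antipodal //; have := rad_ge2 hi; lia.
Qed.

(* Counting C along the antipodal walk ([path_cover_count]); the walk does not repeat
   vertices, so the count is at most the number of vertices of C in cycle i. *)
Lemma antipodal_cover_bound i a l : i < m -> walk_ok i a l -> a + l <= (rad i).*2 ->
  l + (walk_vertex i a \in C) + (walk_vertex i (a + l) \in C)
    <= 2 * #|[set x in C | cidx x == i]|.
Proof.
move=> hi ok hal.
have := path_cover_count (vertex_coverP C_cover) (antipodal_sr_path hi ok).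
rewrite size_map size_iota last_map last_iota -map_cons -/(iota a l.+1) => H.
apply: (leq_trans H); rewrite leq_pmul2l //.
have uniq_f : uniq (map (walk_vertex i) (iota a l.+1)).
  rewrite map_inj_in_uniq ?iota_uniq // => t1 t2; rewrite !mem_iota => ht1 ht2 e.
  have [_ c1 _] := walk_vertex_spec hi ok (ltac:(lia) : a <= t1 <= a + l).
  have [_ c2 _] := walk_vertex_spec hi ok (ltac:(lia) : a <= t2 <= a + l).
  by rewrite e c2 in c1; apply: (antipodal_inj _ _ (esym c1)); lia.
rewrite -size_filter.
have uniq_C : uniq (filter (fun x => x \in C) (map (walk_vertex i) (iota a l.+1))).
  by rewrite filter_uniq.
move/card_uniqP: uniq_C => <-.
apply: subset_leq_card; apply/subsetP => x.
rewrite mem_filter => /andP[xC /mapP[t ht ex]]; subst x.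
move: ht; rewrite mem_iota => ht.
have [e1 _ _] := walk_vertex_spec hi ok (ltac:(lia) : a <= t <= a + l).
by rewrite !inE xC e1 eqxx.
Qed.

(* Whether C misses a vertex at the low end (position 1, or 0 in the first cycle) or at
   the high end (position K, or K+1 in the last cycle) of cycle i. *)
Definition low_free (i : nat) : bool :=
  (vertex_at i 1 \notin C) || ((i == 0) && (vertex_at i 0 \notin C)).

Definition high_free (i : nat) : bool :=
  (vertex_at i (rad i) \notin C) || ((i.+1 == m) && (vertex_at i (rad i).+1 \notin C)).

(* C meets cycle i in at least [base i] vertices, and in one more unless cycle i is
   [deficient]. *)
Definition base (i : nat) : nat := if (i == 0) || (i.+1 == m) then rad i else (rad i).-1.

Definition deficient (i : nat) : bool :=
  ((i.+1 == m) || low_free i) && ((i == 0) || high_free i).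

(* A free low end never precedes a free high end: the two free vertices would form an
   uncovered edge of G_SR ([sr_across]). *)
Lemma free_ends_order i j : i < j -> j < m -> low_free i -> high_free j -> False.
Proof.
move=> lt_ij hj low high; have hi : i < m by lia.
have K2i := rad_ge2 hi; have si := size_rad hi.
have K2j := rad_ge2 hj; have sj := size_rad hj; have gj := gate_rad hj.
have [x [xC cx px]] : exists x, [/\ x \notin C, cidx x = i & cpos x <= 1].
  case/orP: low => [x1C | /andP[/eqP i0 x0C]].
    have [e1 e2] := @vertex_at_spec i 1 hi (ltac:(lia)) (orbT _).
    by exists (vertex_at i 1); rewrite e1 e2.
  have c0 : (i == 0) || (0 != 0) by rewrite i0.
  have [e1 e2] := @vertex_at_spec i 0 hi (ltac:(lia)) c0.
  by exists (vertex_at i 0); rewrite e1 e2.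
have [y [yC cy py ncy]] : exists y, [/\ y \notin C, cidx y = j,
    (cpos y == rad j) || (cpos y == (rad j).+1) & ~~ cut_vertex y].
  have canonK : (j == 0) || (rad j != 0) by lia.
  case/orP: high => [yK | /andP[/eqP jm yK1]].
    have [e1 e2] := @vertex_at_spec j (rad j) hj (ltac:(lia)) canonK.
    exists (vertex_at j (rad j)); rewrite e1 e2 eqxx.
    by split => //; rewrite /cut_vertex e1 e2 gj; lia.
  have [e1 e2] := @vertex_at_spec j (rad j).+1 hj (ltac:(lia)) (orbT _).
  exists (vertex_at j (rad j).+1); rewrite e1 e2 eqxx orbT.
  by split => //; rewrite /cut_vertex e1 jm ltnn andbF.
have lt_xy : cidx x < cidx y by rewrite cx cy.
have high_y : (cpos y == rad (cidx y)) || (cpos y == (rad (cidx y)).+1) by rewrite cy.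
have := vertex_coverP C_cover (sr_across lt_xy px ncy high_y).
by rewrite (negbTE xC) (negbTE yC).
Qed.

(* The per-cycle bound, from a suitable segment of the antipodal walk: steps 0..2K-1
   (positions 0, K, ..., 1) in the first cycle, steps 1..2K (positions K, ..., K+1) in
   the last one and steps 1..2K-1 (positions K, ..., 1) in the others. *)
Lemma cycle_cover_bound i : i < m ->
  base i + ~~ deficient i <= #|[set x in C | cidx x == i]|.
Proof.
move=> hi; have K2 := rad_ge2 hi.
have walk0 t : t <= (rad i).*2 -> (antipodal (rad i) t == 0) = (t == 0).
  by move=> ht; apply: antipodal_eq0; lia.
have walk_opp t :
    t <= (rad i).*2 -> (antipodal (rad i) t == (rad i).+1) = (t == (rad i).*2).
  by move=> ht; apply: antipodal_eq_opp; lia.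
rewrite /base /deficient /low_free /high_free.
case: (i =P 0) => [i0 | i_ne0].
  subst i; have ok : walk_ok 0 0 ((rad 0).*2 - 1) by move=> t ht; rewrite walk_opp /=; lia.
  have := antipodal_cover_bound hi ok (ltac:(lia)).
  rewrite /walk_vertex antipodal0 add0n antipodal_pred_last; last lia.
  rewrite /= (_ : (1 == m) = false); last lia.
  by case: (vertex_at 0 0 \in C); case: (vertex_at 0 1 \in C) => /=; lia.
case: (i.+1 =P m) => [im | i_nlast].
  have ok : walk_ok i 1 ((rad i).*2 - 1).
    by move=> t ht; rewrite walk0 ?im ?eqxx; lia.
  have := antipodal_cover_bound hi ok (ltac:(lia)).
  rewrite /walk_vertex antipodal1 (_ : 1 + ((rad i).*2 - 1) = (rad i).*2); last lia.
  rewrite antipodal_last; last lia.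
  by case: (vertex_at i (rad i) \in C); case: (vertex_at i (rad i).+1 \in C) => /=; lia.
have ok : walk_ok i 1 ((rad i).*2 - 2).
  by move=> t ht; rewrite walk0 ?walk_opp; lia.
have := antipodal_cover_bound hi ok (ltac:(lia)).
rewrite /walk_vertex antipodal1 (_ : 1 + ((rad i).*2 - 2) = (rad i).*2 - 1); last lia.
rewrite antipodal_pred_last; last lia.
by case: (vertex_at i (rad i) \in C); case: (vertex_at i 1 \in C) => /=; lia.
Qed.

(* By [free_ends_order], of two deficient cycles the first would have a free low end
   and the second a free high end. *)
Lemma at_most_one_deficient : \sum_(i < m) (deficient i : nat) <= 1.
Proof.
have -> : \sum_(i < m) (deficient i : nat) = #|[pred i : 'I_m | deficient i]|.
  rewrite -sum1_card [RHS]big_mkcond.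
  by apply: eq_bigr => i _; rewrite inE; case: deficient.
rewrite leqNgt; apply/negP => /card_gt1P [a [b [da db neq_ab]]]; rewrite !inE in da db.
wlog lt_ab : a b da db neq_ab / a < b.
  move=> W; case: (ltngtP a b) => [|gt_ab|/val_inj eq_ab]; first exact: W.
  - by apply: (W b a) => //; rewrite eq_sym.
  - by move: neq_ab; rewrite eq_ab eqxx.
move: da db; rewrite /deficient (_ : (a.+1 == m) = false); last by have := ltn_ord b; lia.
rewrite (_ : (b == 0 :> nat) = false) /=; last lia.
move=> /andP[low_a _] /andP[_ high_b].
exact: (free_ends_order lt_ab (ltn_ord b) low_a high_b).
Qed.

(* Summing the per-cycle bounds: the bases add up to 1 + sum K_i minus the at most one
   missing unit. *)
Lemma cover_size_lb : (\sum_(i < m) rad i).+1 <= #|C|.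
Proof.
have base_ends (i : 'I_m) : base i + 1 = rad i + (i == 0 :> nat) + (i == m.-1 :> nat).
  by have := rad_ge2 (ltn_ord i); have := two_cycles; rewrite /base; case: ifP; lia.
have sum_bases : \sum_(i < m) (base i + 1) = (\sum_(i < m) rad i).+2.
  rewrite (eq_bigr _ (fun i _ => base_ends i)) !big_split /= !sum_indicator; lia.
have per_cycle : \sum_(i < m) (base i + ~~ deficient i) <= #|C|.
  by rewrite (card_by_cycle C); apply: leq_sum => i _; exact: cycle_cover_bound.
have split_def : \sum_(i < m) (base i + ~~ deficient i) + \sum_(i < m) (deficient i : nat)
                 = \sum_(i < m) (base i + 1).
  by rewrite -big_split /=; apply: eq_bigr => i _; case: deficient; rewrite /= ?addn0.
by have := at_most_one_deficient; lia.
Qed.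

End LowerBound.

End ChainCycle.

(* The right-hand side of the statement is 1 + sum K_i: each inner cycle contributes
   (n_i - 2)/2 = K_i - 1, and the m - 2 missing units are part of m - 1. *)
Lemma statement_sum (m : nat) (n : nat -> nat) : 2 <= m ->
  (forall i, 1 <= i <= m -> 5 <= n i) ->
  m - 1 + (n 1)./2 + (n m)./2 + \sum_(2 <= i < m) (n i - 2)./2 = (\sum_(i < m) rad n i).+1.
Proof.
move=> two_cycles n_ge5.
have inner_sum : \sum_(2 <= i < m) (n i - 2)./2 + (m - 2) = \sum_(2 <= i < m) (n i)./2.
  rewrite -[m - 2]muln1 -sum_nat_const_nat -big_split /=; apply: eq_big_nat => i hi.
  have h2 : 2 <= n i by have := n_ge5 i; lia.
  by rewrite -[in RHS](subnK h2) addn2 addn1.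
have all_sum : \sum_(i < m) rad n i = (n 1)./2 + \sum_(2 <= i < m) (n i)./2 + (n m)./2.
  have shift : \sum_(1 <= i < m.+1) (n i)./2 = \sum_(0 <= i < m) (n i.+1)./2.
    by rewrite big_add1.
  rewrite -(big_mkord xpredT (fun i => (n i.+1)./2)) -shift big_ltn; last lia.
  by rewrite big_nat_recr /= ?addnA //; lia.
by rewrite all_sum; lia.
Qed.

Theorem lemma3p7 (m : nat) (n : nat -> nat) :
  2 <= m ->
  (forall i, 1 <= i <= m -> 5 <= n i /\ odd (n i)) ->
  vertex_cover_number (strong_resolving_graph (chain_adj m n)) =
    m - 1 + (n 1)./2 + (n m)./2 + \sum_(2 <= i < m) (n i - 2)./2.
Proof.
move=> two_cycles odd_n.
have odd_cycles : forall i, i < m -> 5 <= n i.+1 /\ odd (n i.+1).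
  by move=> i hi; apply: odd_n; lia.
rewrite statement_sum //; last by move=> i /odd_n [].
have [x0 _] : exists x0 : chain_vert m n, cidx x0 = 0 /\ cpos x0 = 0.
  by apply: chain_vert_at => //; [lia | have := odd_cycles 0; lia].
apply: (vertex_cover_numberE (outer_is_cover odd_cycles)).
- by apply: (card_outer odd_cycles); lia.
- by move=> C C_cover; exact: (cover_size_lb odd_cycles two_cycles C_cover x0).
Qed.
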